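(* Let $r\ge 2$, $s$, $t$ be integers with $r+2 \le s \le t-r+1$. Then \[ P_2(\mathcal{C}(s,r)) \le \Big(1 - \frac{1}{rs^2}\Big)\, P_2(\mathcal{L}(s,r,t)). \]
   Context: For a hypergraph $H$, $P_2(H)=\sum_x d(x)^2$ with $d(x)$ the number of edges containing $x$. The colex order on $r$-subsets of $\mathbb{N}$ is $A<B$ iff $\sum_{i\in A}2^i<\sum_{i\in B}2^i$, and $\mathcal{C}(s,r)$ is the family of the first $s$ $r$-subsets of $\mathbb{N}$ in colex order. The lex order on $[t]^{(r)}$ (the $r$-subsets of $\{1,\dots,t\}$) is $A<B$ iff $\min(A\triangle B)\in A$, and $\mathcal{L}(s,r,t)$ is the $r$-graph on $[t]$ consisting of the first $s$ sets of $[t]^{(r)}$ in lex order. *)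

From mathcomp Require Import all_boot all_order all_algebra.
Set Implicit Arguments. Unset Strict Implicit. Unset Printing Implicit Defensive.

Definition deg n (H : {set {set 'I_n}}) (x : 'I_n) : nat :=
  #|[set A in H | x \in A]|.

Definition P2 n (H : {set {set 'I_n}}) : nat :=
  \sum_(x : 'I_n) (deg H x) ^ 2.

Definition colex_w n (A : {set 'I_n}) : nat := \sum_(i in A) 2 ^ (val i).

Definition colex_init n (s r : nat) : {set {set 'I_n}} :=
  [set A : {set 'I_n} | (#|A| == r) &&
     (#|[set B : {set 'I_n} | (#|B| == r) && (colex_w B < colex_w A)]| < s)].

(* Every r-set with an
   element >= s + r comes after all r-subsets of {0,..,s+r-1}, of which there
   are binomial(s+r, r) >= s; hence the first s r-subsets of N all lie in
   {0,..,s+r-1} = 'I_(s+r), and we may compute them there. *)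
Definition colexC (s r : nat) : {set {set 'I_(s + r)}} := colex_init (s + r) s r.

(* lex order on subsets of [t] (vertex i : 'I_t stands for i+1):
   A < B iff min(A symdiff B) \in A. *)
Definition lex_lt n (A B : {set 'I_n}) : bool :=
  [exists x : 'I_n,
     [&& x \in A, x \notin B &
        [forall y : 'I_n, (y \in (A :\: B) :|: (B :\: A)) ==> (x <= y)]]].

Definition lexL (s r t : nat) : {set {set 'I_t}} :=
  [set A : {set 'I_t} | (#|A| == r) &&
     (#|[set B : {set 'I_t} | (#|B| == r) && lex_lt B A]| < s)].

(* Counting over ordered pairs of edges, P2(H) = sum_(A, B in H) |A :&: B|.
   For m distinct r-sets every off-diagonal term is at most r - 1, so
   P2 <= m r + m (m - 1) (r - 1) =: P2max m r, with equality for a sunflower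
   whose kernel has r - 1 points.  With vertices numbered from 0, L(s,r,t)
   contains the sunflower of the s sets {0,..,r-2} + {r-1+k}, k < s, hence
   P2(L) >= P2max s r.  C(s,r) has at most s sets and contains {1,..,r} and
   {0,..,r-2,r+1}, which share only r - 2 points, hence P2(C) < P2max s r.
   As P2max s r <= r s^2, P2(C) <= P2max s r - 1 <= (1 - 1/(r s^2)) P2(L). *)
From mathcomp Require Import all_boot all_order all_algebra zify lra.
Set Implicit Arguments. Unset Strict Implicit.

Lemma big_ord_interval n a b (F : nat -> nat) : b <= n ->
  \sum_(i : 'I_n | a <= i < b) F i = \sum_(a <= i < b) F i.
Proof.
move=> bn; rewrite big_geq_mkord (big_ord_widen_cond _ _ _ bn).
by apply: eq_bigl => i; rewrite andbC.
Qed.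

Lemma card_interval n a b : b <= n -> #|[set i : 'I_n | a <= i < b]| = b - a.
Proof.
move=> bn; rewrite -sum1_card (eq_bigl (fun i : 'I_n => a <= i < b)) => [|i]; last by rewrite inE.
by rewrite (big_ord_interval _ (fun _ => 1)) // sum_nat_const_nat muln1.
Qed.

Lemma card_initial n m : m <= n -> #|[set i : 'I_n | i < m]| = m.
Proof.
move=> mn; rewrite -[m in RHS]subn0 -(card_interval 0 mn).
by apply: eq_card => i; rewrite !inE.
Qed.

Lemma colex_w_initial n m : m <= n -> colex_w [set i : 'I_n | i < m] = (2 ^ m).-1.
Proof.
move=> mn; rewrite /colex_w (eq_bigl (fun i : 'I_n => 0 <= i < m)) => [|i]; last by rewrite inE.
by rewrite big_ord_interval // predn_exp mul1n big_mkord.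
Qed.

Lemma colex_w_subset n (A B : {set 'I_n}) : A \subset B -> colex_w A <= colex_w B.
Proof.
move=> sAB; rewrite /colex_w [X in _ <= X](big_setID A) /= (setIidPr sAB).
exact: leq_addr.
Qed.

Lemma colex_w_mem n (A : {set 'I_n}) x : x \in A -> 2 ^ x <= colex_w A.
Proof. by move=> Ax; rewrite /colex_w (bigD1 x) //= leq_addr. Qed.

Lemma colex_w_bounded n (A : {set 'I_n}) (m : nat) :
  A \subset [set i : 'I_n | i < m] -> colex_w A < 2 ^ m.
Proof.
move=> sAm; set m' := minn m n.
have sAm' : A \subset [set i : 'I_n | i < m'].
  by apply/subsetP => i /(subsetP sAm); rewrite !inE leq_min ltn_ord andbT.
apply: (leq_ltn_trans (colex_w_subset sAm')).
rewrite colex_w_initial ?geq_minr //.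
have : 2 ^ m' <= 2 ^ m by rewrite leq_pexp2l // geq_minl.
have := expn_gt0 2 m'; lia.
Qed.

Lemma P2_pairs n (H : {set {set 'I_n}}) :
  P2 H = \sum_(A in H) \sum_(B in H) #|A :&: B|.
Proof.
have degE x : deg H x = \sum_(A in H) (x \in A).
  rewrite /deg -sum1_card big_mkcond [RHS]big_mkcond.
  by apply: eq_bigr => A _; rewrite inE; case: (A \in H).
rewrite /P2 (eq_bigr (fun x => \sum_(A in H) \sum_(B in H) ((x \in A) * (x \in B)))).
  rewrite exchange_big; apply: eq_bigr => A _; rewrite exchange_big; apply: eq_bigr => B _.
  rewrite -sum1_card [RHS]big_mkcond; apply: eq_bigr => x _.
  by rewrite inE; case: (x \in A); case: (x \in B).
by move=> x _; rewrite degE -mulnn big_distrl; apply: eq_bigr => A _; rewrite big_distrr.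
Qed.

Lemma P2_subset n (H H' : {set {set 'I_n}}) : H \subset H' -> P2 H <= P2 H'.
Proof.
move=> sHH'; apply: leq_sum => x _; rewrite leq_sqr subset_leq_card //.
by apply/subsetP => A; rewrite !inE => /andP [/(subsetP sHH') -> ->].
Qed.

Lemma sum_pairs_diag (T : finType) (H : {set T}) a b :
  \sum_(A in H) \sum_(B in H) (if A == B then a else b) = #|H| * a + #|H| * #|H|.-1 * b.
Proof.
have rowE A : A \in H -> \sum_(B in H) (if A == B then a else b) = a + #|H|.-1 * b.
  move=> AH; rewrite (bigD1 A) //= eqxx (cardsD1 A H) AH -sum_nat_const.
  congr (_ + _); apply: eq_big => [B | B /andP [_ neqBA]]; first by rewrite !inE andbC.
  by rewrite eq_sym (negPf neqBA).
by rewrite (eq_bigr _ rowE) sum_nat_const mulnDr mulnA.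
Qed.

Lemma ltn_sum_at (I : finType) (P : pred I) (F G : I -> nat) i0 : P i0 ->
  (forall i, P i -> F i <= G i) -> F i0 < G i0 ->
  \sum_(i | P i) F i < \sum_(i | P i) G i.
Proof.
move=> Pi0 leFG ltFG; rewrite (bigD1 i0) // [X in _ < X](bigD1 i0) //= -addSn.
by apply: leq_add => //; apply: leq_sum => i /andP [Pi _]; exact: leFG.
Qed.

Definition P2max m r := m * r + m * m.-1 * r.-1.

Lemma leq_P2max m m' r : m <= m' -> P2max m r <= P2max m' r.
Proof. by move=> le_mm'; rewrite leq_add ?leq_mul // -!subn1 leq_sub2r. Qed.

Lemma P2max_leq m r : P2max m r <= r * m ^ 2.
Proof. rewrite /P2max; case: m => [|m]; case: r => [|r] //=; nia. Qed.

Lemma card_setI_lt (T : finType) (A B : {set T}) :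
  #|A| = #|B| -> A != B -> #|A :&: B| < #|A|.
Proof.
move=> eqAB neqAB; apply: proper_card; apply: properIl; apply: contra neqAB => sAB.
by rewrite eqEcard sAB eqAB leqnn.
Qed.

Lemma P2_lt_P2max n r (H : {set {set 'I_n}}) (A1 A2 : {set 'I_n}) :
  {in H, forall A : {set 'I_n}, #|A| = r} -> A1 \in H -> A2 \in H ->
  #|A1 :&: A2| < r.-1 -> P2 H < P2max #|H| r.
Proof.
move=> unifH A1H A2H ltA12; rewrite P2_pairs /P2max -sum_pairs_diag.
have leAB A B : A \in H -> B \in H -> #|A :&: B| <= (if A == B then r else r.-1).
  move=> AH BH; case: eqP => [<-|/eqP neqAB]; first by rewrite setIid unifH.
  have := card_setI_lt (etrans (unifH A AH) (esym (unifH B BH))) neqAB.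
  by rewrite (unifH A AH); lia.
apply: (ltn_sum_at (i0 := A1)) => // [A AH|]; first by apply: leq_sum => B; exact: leAB.
apply: (ltn_sum_at (i0 := A2)) => // [B BH|]; first exact: leAB.
have neqA12 : A1 != A2.
  by apply: contraTneq ltA12 => <-; rewrite setIid unifH // -leqNgt leq_pred.
by rewrite (negPf neqA12).
Qed.

Lemma P2_sunflower n (K P : {set 'I_n}) :
  [disjoint P & K] -> P2 [set x |: K | x in P] = P2max #|P| #|K|.+1.
Proof.
move=> disPK; have notK x : x \in P -> x \notin K by move=> xP; rewrite (disjointFr disPK).
have petal_inj : {in P &, injective (fun x => x |: K)}.
  move=> x y xP yP eqxy; apply/eqP; have : x \in y |: K by rewrite -eqxy setU11.
  by rewrite in_setU1 (negPf (notK x xP)) orbF.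
rewrite P2_pairs /P2max -sum_pairs_diag big_imset //=; apply: eq_bigr => x xP.
rewrite big_imset //=; apply: eq_bigr => y yP; case: eqP => [<-|/eqP neqxy].
  by rewrite setIid cardsU1 notK.
suff -> : (x |: K) :&: (y |: K) = K by [].
apply/setP => z; rewrite !inE; case: (z \in K); rewrite ?orbT ?orbF //.
by apply/negbTE; apply: contra neqxy => /andP [/eqP <- /eqP <-].
Qed.

Lemma colex_w_card n (A : {set 'I_n}) : 2 ^ #|A| <= (colex_w A).+1.
Proof.
have [k cardA] : {k | #|A| = k} by exists #|A|.
elim: k A cardA => [|k IH] A cardA; rewrite cardA; first by rewrite expn0.
have [x0 Ax0] : exists x, x \in A by apply/card_gt0P; rewrite cardA.
have [m Am maxm] := @arg_maxnP _ x0 (mem A) val Ax0; have {}Am : m \in A := Am.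
have cardAm : #|A :\ m| = k by move: cardA; rewrite (cardsD1 m) Am; lia.
have sAm : A :\ m \subset [set i : 'I_n | i < m].
  apply/subsetP => i; rewrite !inE => /andP [im iA].
  by rewrite ltn_neqAle val_eqE im; exact: maxm.
have km : k <= m.
  by rewrite -cardAm -(card_initial (ltnW (ltn_ord m))) subset_leq_card.
rewrite /colex_w (big_setD1 m) //= -/(colex_w (A :\ m)) expnS.
have := IH _ cardAm; have : 2 ^ k <= 2 ^ m by rewrite leq_exp2l.
rewrite cardAm; lia.
Qed.

Lemma colex_w_lt n (A B : {set 'I_n}) m :
  m \in A :\: B -> B :\: A \subset [set i : 'I_n | i < m] -> colex_w B < colex_w A.
Proof.
move=> mAB sBA; have := colex_w_mem mAB; have := colex_w_bounded sBA.
rewrite /colex_w [X in _ -> _ -> _ < X](big_setID B) [X in _ -> _ -> X < _](big_setID A).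
by rewrite setIC /=; lia.
Qed.

Lemma colex_w_inj n : injective (@colex_w n).
Proof.
move=> A B eqw; apply/eqP; apply: contraT => neqAB.
pose D := (A :\: B) :|: (B :\: A).
have [x0 Dx0] : exists x, x \in D.
  apply/set0Pn; apply: contra neqAB; rewrite setU_eq0 !setD_eq0 => /andP [sAB sBA].
  by rewrite eqEsubset sAB.
have [m Dm maxm] := @arg_maxnP _ x0 (mem D) val Dx0; have {}Dm : m \in D := Dm.
have below (X : {set 'I_n}) :
    X \subset D -> m \notin X -> X \subset [set i : 'I_n | i < m].
  move=> sXD mX; apply/subsetP => i iX.
  have im : i != m by apply: contraNneq mX => <-.
  rewrite inE ltn_neqAle val_eqE im /=; exact/maxm/(subsetP sXD).
move: Dm; rewrite inE => /orP [mAB | mBA].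
- have := colex_w_lt mAB (below _ (subsetUr _ _) _); rewrite eqw ltnn; apply.
  by move: mAB; rewrite !inE => /andP [_ ->].
- have := colex_w_lt mBA (below _ (subsetUl _ _) _); rewrite eqw ltnn; apply.
  by move: mBA; rewrite !inE => /andP [_ ->].
Qed.

Lemma card_colex_init n s r : #|colex_init n s r| <= s.
Proof.
set C := colex_init n s r.
have [->|[A0 A0C]] := set_0Vmem C; first by rewrite cards0.
have [M CM maxM] := @arg_maxnP _ A0 (mem C) (@colex_w n) A0C; have {}CM : M \in C := CM.
move: (CM); rewrite inE => /andP [_]; apply: leq_trans.
rewrite (cardsD1 M) CM add1n ltnS subset_leq_card //.
apply/subsetP => B; rewrite in_setD1 => /andP [BM BC].
have leBM : colex_w B <= colex_w M := maxM B BC.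
move: BC; rewrite !inE => /andP [-> _] /=.
by rewrite ltn_neqAle leBM andbT; apply: contra BM => /eqP/colex_w_inj ->.
Qed.

Lemma mem_colex_init n s r m (A : {set 'I_n}) :
  m <= n -> 'C(m, r) < s -> #|A| = r ->
  (forall B : {set 'I_n}, #|B| = r -> colex_w B < colex_w A ->
     B \subset [set i : 'I_n | i < m]) ->
  A \in colex_init n s r.
Proof.
move=> mn Cs cardA below; rewrite inE cardA eqxx /=; apply: leq_ltn_trans Cs.
rewrite -[in 'C(m, r)](card_initial mn) -cards_draws subset_leq_card //.
apply/subsetP => B; rewrite !inE => /andP [/eqP cardB ltB].
by rewrite below // cardB eqxx.
Qed.

Lemma colex_w_lt_initial n m (A B : {set 'I_n}) :
  A \subset [set i : 'I_n | i < m] -> colex_w B < colex_w A ->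
  B \subset [set i : 'I_n | i < m].
Proof.
move=> sAm ltBA; apply/subsetP => i iB; rewrite inE -(ltn_exp2l _ _ (ltnSn 1)).
exact: leq_ltn_trans (colex_w_mem iB) (ltn_trans ltBA (colex_w_bounded sAm)).
Qed.

Lemma colex_w_lt_petal n r (x : 'I_n) (B : {set 'I_n}) :
  r.-1 <= x -> #|B| = r -> colex_w B < colex_w (x |: [set i : 'I_n | i < r.-1]) ->
  B \subset [set i : 'I_n | i < x].
Proof.
set K := [set i : 'I_n | i < r.-1] => rx cardB ltB.
apply/subsetP => y yB; rewrite inE ltnNge; apply/negP => xy.
have xK : x \notin K by rewrite inE -leqNgt.
have wK : colex_w K = (2 ^ r.-1).-1 by rewrite colex_w_initial // (leq_trans rx) // ltnW.
have cardBy : #|B :\ y| = r.-1 by move: cardB; rewrite (cardsD1 y) yB; lia.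
have := colex_w_card (B :\ y); rewrite cardBy.
have : 2 ^ x <= 2 ^ y by rewrite leq_exp2l.
have := expn_gt0 2 r.-1.
move: ltB; rewrite /colex_w big_setU1 //= (big_setD1 y) //= -/(colex_w K) wK; lia.
Qed.

Lemma P2_colexC_lt s r : 2 <= r -> r + 2 <= s -> P2 (colexC s r) < P2max s r.
Proof.
move=> r_ge2 s_ge; set C := colexC s r.
have rn : r.+1 < s + r by lia.
have binr : 'C(r.+1, r) < s by rewrite binSn; lia.
set S1 := [set i : 'I_(s + r) | 0 < i < r.+1].
set K := [set i : 'I_(s + r) | i < r.-1]; set S2 := Ordinal rn |: K.
have cardK : #|K| = r.-1 by rewrite card_initial //; lia.
have S2K : Ordinal rn \notin K by rewrite inE -leqNgt /=; lia.
have unifC : {in C, forall A : {set 'I_(s + r)}, #|A| = r}.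
  by move=> A; rewrite inE => /andP [/eqP].
have S1C : S1 \in C.
  have sS1 : S1 \subset [set i : 'I_(s + r) | i < r.+1].
    by apply/subsetP => i; rewrite !inE => /andP [].
  apply: (mem_colex_init (ltnW rn) binr); first by rewrite card_interval //; lia.
  by move=> B _; apply: colex_w_lt_initial sS1.
have S2C : S2 \in C.
  apply: (mem_colex_init (ltnW rn) binr); first by rewrite cardsU1 S2K cardK; lia.
  by move=> B cardB; apply: colex_w_lt_petal cardB; rewrite /=; lia.
have S12 : #|S1 :&: S2| < r.-1.
  have sS12 : S1 :&: S2 \subset [set i : 'I_(s + r) | 0 < i < r.-1].
    apply/subsetP => i; rewrite !inE => /andP [/andP [i0 ir] /orP [/eqP ei | ->]].
      by move: ir; rewrite ei ltnn.
    by rewrite i0.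
  by rewrite (leq_ltn_trans (subset_leq_card sS12)) // card_interval; lia.
apply: leq_trans (P2_lt_P2max unifC S1C S2C S12) _.
exact: leq_P2max (card_colex_init _ _ _).
Qed.

Lemma lex_lt_petal n k (x : 'I_n) (B : {set 'I_n}) :
  k <= x -> #|B| = k.+1 -> lex_lt B (x |: [set i : 'I_n | i < k]) ->
  exists2 y : 'I_n, k <= y < x & B = y |: [set i : 'I_n | i < k].
Proof.
set K := [set i : 'I_n | i < k] => kx cardB /existsP [y /and3P [yB yA /forallP miny]].
have le_y z : z \in x |: K -> z \notin B -> y <= z.
  move=> zA zB; apply: (implyP (miny z)).
  by rewrite in_setU [z \in _ :\: B]in_setD zB zA orbT.
move: yA; rewrite in_setU1 negb_or => /andP [yx yK].
have sKB : K \subset B.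
  apply/subsetP => z zK; apply: contraT => zB.
  by have := le_y z (setU1r x zK) zB; move: yK zK; rewrite !inE; lia.
have cardK : #|K| = k by rewrite card_initial // (leq_trans kx) // ltnW.
have eqB : B = y |: K.
  apply/esym/eqP; rewrite eqEcard subUset sub1set yB sKB cardB cardsU1 yK cardK.
  by rewrite add1n ltnSn.
have ky : k <= y by move: yK; rewrite inE -leqNgt.
have xB : x \notin B by rewrite eqB in_setU1 negb_or eq_sym yx inE -leqNgt kx.
exists y => //; rewrite ky ltn_neqAle val_eqE yx /=; exact: le_y (setU11 x K) xB.
Qed.

Lemma petal_mem_lexL s k n (x : 'I_n) :
  k <= x -> x - k < s -> x |: [set i : 'I_n | i < k] \in lexL s k.+1 n.
Proof.
set K := [set i : 'I_n | i < k] => kx xs.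
have xn : x <= n := ltnW (ltn_ord x).
have xK : x \notin K by rewrite inE -leqNgt.
rewrite inE cardsU1 xK card_initial ?(leq_trans kx) // add1n eqxx /=.
apply: leq_ltn_trans xs; rewrite -(card_interval k xn).
apply: leq_trans (leq_imset_card (fun y => y |: K) _); apply: subset_leq_card.
apply/subsetP => B; rewrite inE => /andP [/eqP cardB ltB].
have [y ky ->] := lex_lt_petal kx cardB ltB.
by apply/imsetP; exists y; rewrite ?inE.
Qed.

Lemma P2max_leq_P2_lexL s r t :
  0 < r -> s + r <= t + 1 -> P2max s r <= P2 (lexL s r t).
Proof.
move=> r_gt0 srt; set K := [set i : 'I_t | i < r.-1].
set P := [set y : 'I_t | r.-1 <= y < r.-1 + s].
have disPK : [disjoint P & K].
  by rewrite disjoint_subset; apply/subsetP => y; rewrite !inE; lia.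
have cardP : #|P| = s by rewrite card_interval; lia.
have cardK : #|K| = r.-1 by rewrite card_initial; lia.
have := P2_sunflower disPK; rewrite cardP cardK prednK // => <-.
apply: P2_subset; apply/subsetP => _ /imsetP [y yP ->].
rewrite -[r in lexL _ r](prednK r_gt0); apply: petal_mem_lexL; move: yP; rewrite inE; lia.
Qed.

Import GRing.Theory Num.Theory.
Local Open Scope ring_scope.

Lemma ler_one_subVn_mul (R : realFieldType) (a N b X : nat) :
  (a < N)%N -> (N <= b)%N -> (N <= X)%N ->
  a%:R <= (1 - 1 / X%:R) * b%:R :> R.
Proof.
move=> aN Nb NX; have X_gt0 : (0 < X)%N by lia.
have a1 : a%:R + 1 <= N%:R :> R by rewrite natr1 ler_nat.
set y := 1 / X%:R; have yX : y * X%:R = 1 by rewrite /y mul1r mulVf // pnatr_eq0 -lt0n.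
have y_ge0 : 0 <= y by rewrite divr_ge0.
have b_excess : 0 <= (b%:R - N%:R) * (1 - y) :> R.
  rewrite mulr_ge0 // subr_ge0 ?ler_nat //.
  by rewrite -[leRHS]yX ler_peMr // ler1n.
have X_excess : 0 <= y * (X%:R - N%:R) :> R by rewrite mulr_ge0 // subr_ge0 ler_nat.
(* (1 - y) b - a >= (b - N) (1 - y) + y (X - N), using y X = 1 and a + 1 <= N. *)
nra.
Qed.

Theorem proposition6p4 (r s t : nat) :
  (2 <= r)%N -> (r + 2 <= s)%N -> (s + r <= t + 1)%N ->
  (P2 (colexC s r))%:R <= (1 - 1 / (r * s ^ 2)%:R) * (P2 (lexL s r t))%:R :> rat.
Proof.
move=> r_ge2 s_ge t_ge.
apply: ler_one_subVn_mul (P2_colexC_lt r_ge2 s_ge) _ (P2max_leq _ _).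
exact: P2max_leq_P2_lexL (ltnW r_ge2) t_ge.
Qed.
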